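(* Let $q>0$, $k>0$, $D>0$, and let $\bar U=(\bar u,\bar z,\bar y):\mathbb{R}\to\mathbb{R}^3$ be a $C^1$ solution of the traveling-wave system \[ u'=\Big(\tfrac12 u^2-\tfrac12 u_-^2\Big)-(u-u_-)-q(z+Dy),\qquad z'=y,\qquad y'=D^{-1}\big(-y+k\varphi(u)z\big), \] (where $'=\mathrm{d}/\mathrm{d}\xi$) satisfying $\bar z(\xi)\ge 0$ for all $\xi$ and \[ \lim_{\xi\to-\infty}\bar U(\xi)=(u_-,0,0),\qquad \lim_{\xi\to+\infty}\bar U(\xi)=(u_+,1,0), \] where $u_\pm$ satisfy the Rankine–Hugoniot relation $\tfrac12(u_+^2-u_-^2)=u_+-u_-+q$, $u_+<u_{\mathrm{ig}}<u_-$, and the weak-detonation condition $u_+,u_-<1$. Then $\bar u(\xi)\le u_-$ for all $\xi\in\mathbb{R}$, and $\bar u$ is a decreasing (non-increasing) function of $\xi$ on $\mathbb{R}$.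
   Context: This is the rescaled Majda model $u_t-u_x+(u^2/2)_x=u_{xx}+qk\varphi(u)z$, $z_t-z_x=Dz_{xx}-k\varphi(u)z$ (wave speed normalized to $s=1$, viscosity to $1$, flux $f(u)=u^2/2$), whose traveling waves $(\bar u,\bar z)(x-t)$ with $\bar y=\bar z'$ satisfy the displayed ODE system. The ignition function is $\varphi(u)=0$ for $u\le u_{\mathrm{ig}}$ and $\varphi(u)=e^{-E_A/(u-u_{\mathrm{ig}})}$ for $u>u_{\mathrm{ig}}$, with activation energy $E_A>0$ and fixed ignition threshold $u_{\mathrm{ig}}$. A weak detonation is such a connection with $f'(u_\pm)=u_\pm<s=1$. *)

From Stdlib Require Import Reals.
Open Scope R_scope.

Definition phi (EA uig u : R) : R :=
  if Rle_dec u uig then 0 else exp (- EA / (u - uig)).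

Definition lim_pinf (f : R -> R) (l : R) : Prop :=
  forall eps : R, 0 < eps -> exists M : R, forall x : R, M <= x -> Rabs (f x - l) < eps.

Definition lim_minf (f : R -> R) (l : R) : Prop :=
  forall eps : R, 0 < eps -> exists M : R, forall x : R, x <= M -> Rabs (f x - l) < eps.

(* Write w = z + D y and v = u'.  The system gives w' = k phi(u) z >= 0, so w is
   non-decreasing; since w -> 0 at -oo, w >= 0.  Hence
     u' = (u - u_-)((u + u_-)/2 - 1) - q w
   is negative whenever u_- < u < 2 - u_-, and a function that tends to u_- at
   -oo and is repelled downwards just above u_- never exceeds u_-.
   Differentiating once more, v' = (u - 1) v - q k phi(u) z, which is negative
   wherever v > 0 (because u <= u_- < 1).  A derivative that is pushed down
   whenever it is positive, of a function converging at -oo, is everywhere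
   <= 0: otherwise it either upcrosses a positive level (impossible) or stays
   above it on a half-line (contradicting convergence). *)
From Stdlib Require Import Reals Lra Psatz Classical.
Open Scope R_scope.

Lemma deriv_continuity f x l : derivable_pt_lim f x l ->
  forall eps, 0 < eps ->
  exists del, 0 < del /\ forall t, Rabs (t - x) < del -> Rabs (f t - f x) < eps.
Proof.
  intros Hder eps Heps.
  assert (Hcont : continuity_pt f x)
    by (apply derivable_continuous_pt; exists l; exact Hder).
  destruct (Hcont eps Heps) as [del [Hdel Hclose]].
  exists del; split; [exact Hdel|]. intros t Ht.
  destruct (Req_dec t x) as [->|Hne].
  - rewrite Rminus_diag, Rabs_R0; lra.
  - apply (Hclose t); split; [split; [exact I|auto]|exact Ht].
Qed.

Lemma mean_value f f' a b : (forall x, derivable_pt_lim f x (f' x)) -> a < b ->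
  exists c, a < c < b /\ f b - f a = f' c * (b - a).
Proof.
  intros Hder Hab.
  set (pr := fun x => exist (fun l => derivable_pt_lim f x l) (f' x) (Hder x)
                      : derivable_pt f x).
  destruct (MVT_cor1 f a b pr Hab) as [c [Hc Hmid]].
  exists c; split; auto.
Qed.

Lemma deriv_ext f g x l l' : (forall t, f t = g t) ->
  derivable_pt_lim f x l -> l = l' -> derivable_pt_lim g x l'.
Proof.
  intros Hfg Hder <- eps Heps. destruct (Hder eps Heps) as [d Hd].
  exists d. intros h Hh0 Hh. rewrite <- !Hfg. apply Hd; auto.
Qed.

Lemma nondecreasing_of_deriv_nonneg f f' :
  (forall x, derivable_pt_lim f x (f' x)) -> (forall x, 0 <= f' x) ->
  forall a b, a <= b -> f a <= f b.
Proof.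
  intros Hder Hpos a b Hab. destruct (Req_dec a b) as [->|Hne]; [lra|].
  destruct (mean_value f f' a b Hder) as [c [Hc Hmid]]; [lra|].
  pose proof (Hpos c). nra.
Qed.

Lemma nonincreasing_of_deriv_nonpos f f' :
  (forall x, derivable_pt_lim f x (f' x)) -> (forall x, f' x <= 0) ->
  forall a b, a <= b -> f b <= f a.
Proof.
  intros Hder Hneg a b Hab. destruct (Req_dec a b) as [->|Hne]; [lra|].
  destruct (mean_value f f' a b Hder) as [c [Hc Hmid]]; [lra|].
  pose proof (Hneg c). nra.
Qed.

Lemma left_point_below M x : exists a, a <= M /\ a < x.
Proof.
  exists (Rmin M (x - 1)). split; [apply Rmin_l|].
  pose proof (Rmin_r M (x - 1)); lra.
Qed.

Lemma last_exit f f' a b al : (forall x, derivable_pt_lim f x (f' x)) ->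
  a < b -> f a <= al -> al < f b ->
  exists s, a <= s < b /\ f s <= al /\ forall t, s < t <= b -> al < f t.
Proof.
  intros Hder Hab Ha Hb.
  set (E := fun t => a <= t <= b /\ f t <= al).
  assert (HE : exists t, E t) by (exists a; unfold E; split; lra).
  assert (Hbound : bound E) by (exists b; intros t [[? ?] ?]; auto).
  destruct (completeness E Hbound HE) as [s [Hub Hlub]].
  assert (Has : a <= s) by (apply Hub; unfold E; split; lra).
  assert (Hsb : s <= b) by (apply Hlub; intros t [[? ?] ?]; auto).
  assert (Hafter : forall t, s < t <= b -> al < f t).
  { intros t Ht. apply Rnot_le_lt; intros Hle.
    assert (t <= s) by (apply Hub; split; [lra|exact Hle]). lra. }
  (* If f s > al, continuity keeps f > al on a left neighbourhood of s,
     so s - del/2 would be a smaller upper bound of E. *)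
  assert (Hfs : f s <= al).
  { apply Rnot_lt_le; intros Hgt.
    destruct (deriv_continuity f s (f' s) (Hder s) (f s - al)) as [d [Hd Hc]]; [lra|].
    assert (s <= s - d / 2); [|lra].
    apply Hlub. intros t [Ht Hft]. apply Rnot_lt_le; intros Hlt.
    assert (t <= s) by (apply Hub; split; auto).
    assert (Hts : Rabs (t - s) < d) by (rewrite Rabs_left1; lra).
    pose proof (Rabs_def2 _ _ (Hc t Hts)). lra. }
  exists s; split; [split; [exact Has|]|split; [exact Hfs|exact Hafter]].
  destruct (Req_dec s b) as [->|]; lra.
Qed.

Lemma upcrossing_slope f f' a b al be :
  (forall x, derivable_pt_lim f x (f' x)) -> a < b ->
  f a < al -> al < f b -> al < be -> exists t, al < f t < be /\ 0 < f' t.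
Proof.
  intros Hder Hab Ha Hb Hbe.
  destruct (last_exit f f' a b al Hder Hab) as [s [Hs [Hfs Hafter]]]; [lra|lra|].
  destruct (deriv_continuity f s (f' s) (Hder s) (be - al)) as [d [Hd Hc]]; [lra|].
  pose proof (Rmin_l d (b - s)). pose proof (Rmin_r d (b - s)).
  assert (Hm : 0 < Rmin d (b - s)) by (apply Rmin_pos; lra).
  set (r := s + Rmin d (b - s) / 2).
  assert (Hsr : s < r) by (unfold r; lra).
  assert (Hfr : al < f r) by (apply Hafter; unfold r; lra).
  destruct (mean_value f f' s r Hder Hsr) as [c [Hcr Hmid]].
  exists c. split; [split|].
  - apply Hafter; unfold r in *; lra.
  - assert (Hcs : Rabs (c - s) < d) by (rewrite Rabs_right; unfold r in *; lra).
    pose proof (Rabs_def2 _ _ (Hc c Hcs)). lra.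
  - apply Rnot_le_lt; intros Hle. assert (f' c * (r - s) <= 0) by nra. lra.
Qed.

Lemma below_limit_barrier f f' l del :
  (forall x, derivable_pt_lim f x (f' x)) -> lim_minf f l -> 0 < del ->
  (forall t, l < f t < l + del -> f' t < 0) -> forall x, f x <= l.
Proof.
  intros Hder Hlim Hdel Hrepel x0. apply Rnot_lt_le; intros Habove.
  set (be := Rmin (f x0) (l + del)).
  assert (Hbe_x0 : be <= f x0) by apply Rmin_l.
  assert (Hbe_del : be <= l + del) by apply Rmin_r.
  assert (Hbe : l < be) by (apply Rmin_glb_lt; lra).
  set (al := (l + be) / 2).
  destruct (Hlim (al - l)) as [M HM]; [unfold al; lra|].
  destruct (left_point_below M x0) as [a [HaM Hax]].
  pose proof (Rabs_def2 _ _ (HM a HaM)).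
  destruct (upcrossing_slope f f' a x0 al be Hder Hax) as [t [Ht Hslope]];
    unfold al in *; try lra.
  pose proof (Hrepel t ltac:(lra)). lra.
Qed.

Lemma no_uniform_growth_at_minf f f' l c x0 :
  (forall x, derivable_pt_lim f x (f' x)) -> lim_minf f l -> 0 < c ->
  (forall t, t < x0 -> c <= f' t) -> False.
Proof.
  intros Hder Hlim Hc Hgrow.
  destruct (Hlim 1) as [M HM]; [lra|].
  destruct (left_point_below M x0) as [x1 [Hx1M Hx1]].
  set (x2 := x1 - 2 / c).
  assert (Hstep : 0 < 2 / c) by (apply Rdiv_lt_0_compat; lra).
  destruct (mean_value f f' x2 x1 Hder) as [t [Ht Hmid]]; [unfold x2; lra|].
  assert (Hslope : c * (x1 - x2) <= f' t * (x1 - x2))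
    by (apply Rmult_le_compat_r; [unfold x2; lra|apply Hgrow; lra]).
  assert (Hrise : c * (x1 - x2) = 2) by (unfold x2; field; lra).
  pose proof (Rabs_def2 _ _ (HM x1 Hx1M)). pose proof (Rabs_def2 _ _ (HM x2 ltac:(unfold x2; lra))).
  lra.
Qed.

Lemma deriv_nonpos_of_self_damping f v v' l :
  (forall x, derivable_pt_lim f x (v x)) -> (forall x, derivable_pt_lim v x (v' x)) ->
  lim_minf f l -> (forall t, 0 < v t -> v' t < 0) -> forall x, v x <= 0.
Proof.
  intros Hf Hv Hlim Hdamp x0. apply Rnot_lt_le; intros Hpos.
  set (c := v x0 / 2).
  destruct (classic (exists a, a < x0 /\ v a < c)) as [[a [Ha Hva]]|Hstays].
  - destruct (upcrossing_slope v v' a x0 c (v x0) Hv Ha) as [t [Ht Hslope]];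
      unfold c in *; try lra.
    pose proof (Hdamp t ltac:(lra)). lra.
  - apply (no_uniform_growth_at_minf f v l c x0 Hf Hlim); [unfold c; lra|].
    intros t Ht. apply Rnot_lt_le; intros Hlt. apply Hstays; exists t; auto.
Qed.

Lemma nondecreasing_above_limit f l :
  (forall a b, a <= b -> f a <= f b) -> lim_minf f l -> forall x, l <= f x.
Proof.
  intros Hmono Hlim x. apply Rnot_lt_le; intros Hlt.
  destruct (Hlim (l - f x)) as [M HM]; [lra|].
  destruct (left_point_below M x) as [a [HaM Hax]].
  pose proof (Rabs_def2 _ _ (HM a HaM)). pose proof (Hmono a x ltac:(lra)). lra.
Qed.

Lemma lim_minf_lincomb f g a b c :
  lim_minf f a -> lim_minf g b -> lim_minf (fun t => f t + c * g t) (a + c * b).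
Proof.
  intros Hf Hg eps Heps.
  set (e := eps / (2 * (1 + Rabs c))).
  pose proof (Rabs_pos c).
  assert (He : 0 < e) by (apply Rdiv_lt_0_compat; lra).
  destruct (Hf e He) as [M1 HM1]. destruct (Hg e He) as [M2 HM2].
  exists (Rmin M1 M2). intros x Hx.
  pose proof (HM1 x (Rle_trans _ _ _ Hx (Rmin_l M1 M2))) as H1.
  pose proof (HM2 x (Rle_trans _ _ _ Hx (Rmin_r M1 M2))) as H2.
  replace (f x + c * g x - (a + c * b)) with ((f x - a) + c * (g x - b)) by ring.
  eapply Rle_lt_trans; [apply Rabs_triang|]. rewrite Rabs_mult.
  assert (Rabs c * Rabs (g x - b) <= Rabs c * e)
    by (apply Rmult_le_compat_l; lra).
  assert (Hsum : e + Rabs c * e = eps / 2) by (unfold e; field; lra).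
  lra.
Qed.

Lemma phi_nonneg EA uig s : 0 <= phi EA uig s.
Proof. unfold phi. destruct (Rle_dec s uig); [lra|left; apply exp_pos]. Qed.

(* The reaction-free part of u' is negative just above u_- when u_- < 1:
   it factors as (s - um)((s + um)/2 - 1). *)
Lemma flux_negative_above um s : um < s < 2 - um ->
  / 2 * s ^ 2 - / 2 * um ^ 2 - (s - um) < 0.
Proof.
  intros Hs.
  replace (/ 2 * s ^ 2 - / 2 * um ^ 2 - (s - um)) with ((s - um) * ((s + um) / 2 - 1))
    by field.
  apply Rmult_pos_neg; lra.
Qed.

Lemma reactant_total_deriv (k D EA uig : R) (u z y : R -> R) : 0 < D ->
  (forall x, derivable_pt_lim z x (y x)) ->
  (forall x, derivable_pt_lim y x (/ D * (- y x + k * phi EA uig (u x) * z x))) ->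
  forall x, derivable_pt_lim (fun t => z t + D * y t) x (k * phi EA uig (u x) * z x).
Proof.
  intros hD hz' hy' x.
  eapply (deriv_ext (z + mult_real_fct D y)%F); [reflexivity| |].
  - apply derivable_pt_lim_plus; [apply hz'|apply derivable_pt_lim_scal, hy'].
  - field; lra.
Qed.

Lemma velocity_deriv (q um : R) (u w w' : R -> R) :
  let v := fun t => / 2 * u t ^ 2 - / 2 * um ^ 2 - (u t - um) - q * w t in
  (forall x, derivable_pt_lim u x (v x)) -> (forall x, derivable_pt_lim w x (w' x)) ->
  forall x, derivable_pt_lim v x ((u x - 1) * v x - q * w' x).
Proof.
  intros v Hu Hw x.
  eapply (deriv_ext (mult_real_fct (/ 2) (u * u) - fct_cte (/ 2 * um ^ 2)
                    - (u - fct_cte um) - mult_real_fct q w)%F).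
  - intros t. unfold v, mult_real_fct, fct_cte, minus_fct, mult_fct. ring.
  - repeat first [ apply derivable_pt_lim_minus | apply derivable_pt_lim_scal
                 | apply derivable_pt_lim_mult | apply derivable_pt_lim_const
                 | apply Hu | apply Hw ].
  - field.
Qed.

Theorem proposition2p3
  (q k D EA uig um up : R) (u z y : R -> R)
  (hq : 0 < q) (hk : 0 < k) (hD : 0 < D) (hEA : 0 < EA)
  (hu' : forall xi : R, derivable_pt_lim u xi
     ((/2 * (u xi)^2 - /2 * um^2) - (u xi - um) - q * (z xi + D * y xi)))
  (hz' : forall xi : R, derivable_pt_lim z xi (y xi))
  (hy' : forall xi : R, derivable_pt_lim y xi
     (/ D * (- y xi + k * phi EA uig (u xi) * z xi)))
  (hznn : forall xi : R, 0 <= z xi)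
  (hlu_m : lim_minf u um) (hlz_m : lim_minf z 0) (hly_m : lim_minf y 0)
  (hlu_p : lim_pinf u up) (hlz_p : lim_pinf z 1) (hly_p : lim_pinf y 0)
  (hRH : /2 * (up^2 - um^2) = up - um + q)
  (hord : up < uig < um)
  (hweak : up < 1 /\ um < 1) :
  (forall xi : R, u xi <= um) /\
  (forall a b : R, a <= b -> u b <= u a).
Proof.
  set (w := fun t => z t + D * y t).
  set (w' := fun t => k * phi EA uig (u t) * z t).
  set (v := fun t => / 2 * u t ^ 2 - / 2 * um ^ 2 - (u t - um) - q * w t).
  assert (Hw' : forall x, 0 <= w' x)
    by (intros x; apply Rmult_le_pos; [apply Rmult_le_pos; [lra|apply phi_nonneg]|auto]).
  assert (Hw : forall x, derivable_pt_lim w x (w' x))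
    by exact (reactant_total_deriv k D EA uig u z y hD hz' hy').
  assert (Hw_lim : lim_minf w 0).
  { replace 0 with (0 + D * 0) by ring. exact (lim_minf_lincomb z y 0 0 D hlz_m hly_m). }
  assert (Hw_nonneg : forall x, 0 <= w x)
    by exact (nondecreasing_above_limit w 0
                (nondecreasing_of_deriv_nonneg w w' Hw Hw') Hw_lim).
  assert (Hbound : forall x, u x <= um).
  { apply (below_limit_barrier u v um (2 - 2 * um) hu' hlu_m); [lra|].
    intros t Ht. pose proof (flux_negative_above um (u t) ltac:(lra)).
    pose proof (Rmult_le_pos q (w t) ltac:(lra) (Hw_nonneg t)). unfold v; lra. }
  assert (Hv_nonpos : forall x, v x <= 0).
  { apply (deriv_nonpos_of_self_damping u v _ um hu'
             (velocity_deriv q um u w w' hu' Hw) hlu_m).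
    intros t Hvt. pose proof (Rmult_le_pos q (w' t) ltac:(lra) (Hw' t)).
    assert ((u t - 1) * v t < 0) by (apply Rmult_neg_pos; [pose proof (Hbound t)|]; lra).
    change ((u t - 1) * v t - q * w' t < 0); lra. }
  split; [exact Hbound|exact (nonincreasing_of_deriv_nonpos u v hu' Hv_nonpos)].
Qed.
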